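(* Let $Q=[u_1,\dots,u_n]\subset\mathbb{S}^2$ with $n\ge 6$ be a spherical polygon not contained in any closed hemisphere, without self-intersections and antipodal intersections, with exactly three essential vertices. Then no two of the three essential vertices are consecutive in $Q$.
   Context: A spherical polygon has edges the minimal great-circle arcs between consecutive vertices (indices mod $n$); no three vertices lie on a common great circle. A set is balanced if not contained in any closed hemisphere; for balanced $Q$, $u_m$ is essential if the vertex set minus $u_m$ is not balanced. Self-intersection: two non-adjacent edges intersect; antipodal intersection: non-adjacent edges $e,f$ with $e\cap(-f)\neq\emptyset$. *)

(* points of S^2 are unit row vectors in 'rV[R]_3, R : realType. *)
From HB Require Import structures.
From mathcomp Require Import all_boot all_order all_algebra.
From mathcomp Require Import reals.
Set Implicit Arguments. Unset Strict Implicit. Unset Printing Implicit Defensive.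
Import Order.TTheory GRing.Theory Num.Theory.
Local Open Scope ring_scope.

Section Spherical.
Variable R : realType.

Definition dot (a b : 'rV[R]_3) : R := \sum_(i < 3) a 0 i * b 0 i.

Definition on_sphere (x : 'rV[R]_3) : Prop := dot x x = 1.

Definition det3 (a b c : 'rV[R]_3) : R :=
  \det (\matrix_(i < 3, j < 3) (if i == 0 :> nat then a 0 j
                                else if i == 1 :> nat then b 0 j else c 0 j)).

(* the (minimal) great-circle arc between a and b (with a <> +-b):
   unit vectors in the closed cone spanned by a and b *)
Definition on_arc (a b x : 'rV[R]_3) : Prop :=
  on_sphere x /\ exists s t : R, 0 <= s /\ 0 <= t /\ x = s *: a + t *: b.

(* closed hemisphere with pole v : {x | dot v x >= 0}; a family of points
   is balanced if it lies in no closed hemisphere *)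
Definition balanced (I : Type) (P : I -> Prop) (w : I -> 'rV[R]_3) : Prop :=
  forall v : 'rV[R]_3, v != 0 -> exists k, P k /\ dot v (w k) < 0.
End Spherical.

Definition nxt (n : nat) (i : 'I_n) : 'I_n :=
  Ordinal (ltn_pmod i.+1 (leq_ltn_trans (leq0n i) (ltn_ord i))).

Section Polygon.
Variables (R : realType) (n : nat) (u : 'I_n -> 'rV[R]_3).

(* no three vertices on a common great circle *)
Definition general_position : Prop :=
  forall i j k : 'I_n, i != j -> j != k -> i != k -> det3 (u i) (u j) (u k) != 0.

Definition on_edge (i : 'I_n) (x : 'rV[R]_3) : Prop := on_arc (u i) (u (nxt i)) x.

Definition nonadjacent (i j : 'I_n) : Prop := i != j /\ j != nxt i /\ i != nxt j.

Definition no_self_intersection : Prop :=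
  forall i j, nonadjacent i j -> ~ exists x, on_edge i x /\ on_edge j x.

Definition no_antipodal_intersection : Prop :=
  forall i j, nonadjacent i j -> ~ exists x, on_edge i x /\ on_edge j (- x).

Definition polygon_balanced : Prop := balanced (fun _ : 'I_n => True) u.

Definition essential (m : 'I_n) : Prop := ~ balanced (fun k : 'I_n => k != m) u.
End Polygon.

From HB Require Import structures.
From mathcomp Require Import all_boot all_order all_algebra.
From mathcomp Require Import reals.
From mathcomp Require Import ring lra zify.
From Stdlib Require Import Classical.
Import Order.TTheory GRing.Theory Num.Theory.
Set Implicit Arguments. Unset Strict Implicit. Unset Printing Implicit Defensive.
Local Open Scope ring_scope.

(* Let u_a, u_b, u_c be the essential vertices, and let v_m be a pole isolating
   u_m: the closed hemisphere v_m . x >= 0 contains every vertex but u_m.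
   Balance, together with general position (no nonzero vector is orthogonal to
   three of the n - 3 >= 3 remaining vertices), forbids a nontrivial nonnegative
   combination of v_a, v_b, v_c that is nonnegative on u_a, u_b, u_c.  The
   adjugate of the matrix (v_j . u_k) then yields such a combination w that
   vanishes on u_b, u_c and is negative on u_a, while w >= 0 on every other
   vertex; by Cramer's rule every other vertex lies strictly inside the cone
   spanned by -u_a, -u_b, -u_c.  Hence for any other vertex u_p the arc u_a u_b
   meets the antipode of the arc u_c u_p.  If u_i and u_(i+1) were both
   essential, with third essential vertex u_e, this applies to the edge
   u_i u_(i+1) and to the edge entering or the edge leaving u_e, one of which is
   not adjacent to it as n >= 4: an antipodal intersection. *)

Section Vectors.
Variable R : realType.
Implicit Types (a b c p x y v w : 'rV[R]_3) (s t : R).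

Definition entry x (k : nat) : R := x 0 (inord k).

Lemma entryD x y k : entry (x + y) k = entry x k + entry y k.
Proof. by rewrite /entry mxE. Qed.

Lemma entryZ s x k : entry (s *: x) k = s * entry x k.
Proof. by rewrite /entry mxE. Qed.

Lemma entryN x k : entry (- x) k = - entry x k.
Proof. by rewrite /entry mxE. Qed.

Lemma entry0 k : entry (0 : 'rV[R]_3) k = 0.
Proof. by rewrite /entry mxE. Qed.

Definition entryE := (entryD, entryZ, entryN, entry0).

Lemma entry_ord x (i : 'I_3) : x 0 i = entry x i.
Proof. by rewrite /entry inord_val. Qed.

Lemma row3P x y :
  entry x 0 = entry y 0 -> entry x 1 = entry y 1 -> entry x 2 = entry y 2 -> x = y.
Proof.
move=> e0 e1 e2; apply/rowP => j; rewrite -[j]inord_val.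
by case: j => -[|[|[|k]]].
Qed.

Lemma dotE x y :
  dot x y = entry x 0 * entry y 0 + entry x 1 * entry y 1 + entry x 2 * entry y 2.
Proof. by rewrite /dot !big_ord_recl big_ord0 !entry_ord /= /bump /= addr0 addrA. Qed.

Lemma det3E a b c : det3 a b c =
    entry a 0 * (entry b 1 * entry c 2 - entry b 2 * entry c 1)
  - entry a 1 * (entry b 0 * entry c 2 - entry b 2 * entry c 0)
  + entry a 2 * (entry b 0 * entry c 1 - entry b 1 * entry c 0).
Proof.
rewrite /det3 (expand_det_row _ 0) !big_ord_recl big_ord0 /cofactor.
rewrite !(expand_det_row _ 0) !big_ord_recl !big_ord0 /cofactor !det_mx11 !mxE /=.
rewrite !entry_ord /= /bump /= ?(addn0, add0n) (_ : (1 + 1 = 2)%N) //; ring.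
Qed.

Lemma dotDl x y z : dot (x + y) z = dot x z + dot y z.
Proof. by rewrite !dotE !entryE; ring. Qed.

Lemma dotZl s x y : dot (s *: x) y = s * dot x y.
Proof. by rewrite !dotE !entryE; ring. Qed.

Lemma dotNl x y : dot (- x) y = - dot x y.
Proof. by rewrite !dotE !entryE; ring. Qed.

Lemma dotC x y : dot x y = dot y x.
Proof. by rewrite !dotE; ring. Qed.

Lemma dot_ge0 x : 0 <= dot x x.
Proof. by apply: sumr_ge0 => i _; rewrite -expr2 sqr_ge0. Qed.

Lemma dot_eq0 x : (dot x x == 0) = (x == 0).
Proof.
apply/idP/eqP => [/eqP x0 | ->]; last by rewrite /dot big1 // => i _; rewrite mxE mul0r.
have sq_ge0 (i : 'I_3) : true -> 0 <= x 0 i * x 0 i by rewrite -expr2 sqr_ge0.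
apply/rowP => i; rewrite mxE; apply/eqP; rewrite -sqrf_eq0 expr2.
by rewrite (psumr_eq0P sq_ge0 x0).
Qed.

Lemma dot_gt0 x : x != 0 -> 0 < dot x x.
Proof. by move=> x0; rewrite lt_def dot_eq0 x0 dot_ge0. Qed.

Lemma det3_rot a b c : det3 a b c = det3 b c a.
Proof. by rewrite !det3E; ring. Qed.

Lemma det3_rotr a b c : det3 a b c = det3 c a b.
Proof. by rewrite !det3E; ring. Qed.

Lemma det3_cramer a b c p :
  det3 a b c *: p = det3 p b c *: a + det3 a p c *: b + det3 a b p *: c.
Proof. by apply: row3P; rewrite !entryE !det3E; ring. Qed.

Lemma det3_dot_cramer a b c p v : det3 a b c * dot v p =
  det3 p b c * dot v a + det3 a p c * dot v b + det3 a b p * dot v c.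
Proof. by rewrite ![dot v _]dotC -!dotZl -!dotDl det3_cramer. Qed.

Lemma det3_orthogonal v a b c : v != 0 ->
  dot v a = 0 -> dot v b = 0 -> dot v c = 0 -> det3 a b c = 0.
Proof.
move=> v0 va vb vc; have := det3_dot_cramer a b c v v.
rewrite va vb vc !mulr0 !addr0 => /eqP.
by rewrite mulf_eq0 dot_eq0 (negbTE v0) orbF => /eqP.
Qed.

Definition normalize x := (Num.sqrt (dot x x))^-1 *: x.

Lemma normalizeN x : normalize (- x) = - normalize x.
Proof. by rewrite /normalize dotNl dotC dotNl opprK scalerN. Qed.

Lemma on_sphere_normalize x : x != 0 -> on_sphere (normalize x).
Proof.
move=> x0; have xx := dot_gt0 x0.
rewrite /on_sphere /normalize dotZl dotC dotZl mulrA -expr2 exprVn sqr_sqrtr ?ltW //.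
by rewrite mulVf // gt_eqF.
Qed.

Lemma on_arc_normalize a b x s t : x != 0 -> 0 <= s -> 0 <= t ->
  x = s *: a + t *: b -> on_arc a b (normalize x).
Proof.
move=> x0 s0 t0 ex; split; first exact: on_sphere_normalize.
rewrite /normalize; set r := _^-1.
have r0 : 0 <= r by rewrite invr_ge0 sqrtr_ge0.
by exists (r * s), (r * t); rewrite !mulr_ge0 // ex scalerDr !scalerA.
Qed.

Lemma on_arcC a b x : on_arc a b x -> on_arc b a x.
Proof. by case=> xS [s [t [s0 [t0 ex]]]]; split=> //; exists t, s; rewrite ex addrC. Qed.

Lemma positive_relation_antipodal_arcs a b c p s t r q : det3 a b c != 0 ->
  0 < s -> 0 < t -> 0 <= r -> 0 <= q -> s *: a + t *: b + r *: c + q *: p = 0 ->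
  exists y, on_arc a b y /\ on_arc c p (- y).
Proof.
move=> abc s0 t0 r0 q0 sum0.
pose w := s *: a + t *: b.
have w0 : w != 0.
  apply: contra_neq abc => w0.
  have : s * det3 a b c = det3 w b c by rewrite !det3E !entryE; ring.
  rewrite w0 [det3 0 _ _]det3E !entry0 !mul0r !subr0 addr0 => /eqP.
  by rewrite mulf_eq0 gt_eqF //= => /eqP.
have opp_w : - w = r *: c + q *: p.
  by apply/eqP; rewrite eqr_oppLR -addr_eq0 /w !addrA sum0.
exists (normalize w); split; first exact: on_arc_normalize w0 (ltW s0) (ltW t0) _.
by rewrite -normalizeN; apply: on_arc_normalize opp_w; rewrite ?oppr_eq0.
Qed.
End Vectors.

Lemma card_set3_le (T : finType) (a b c : T) : (#|[set a; b; c]| <= 3)%N.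
Proof. by rewrite setUC cardsU1 cards2; case: (_ \notin _); case: (a != b). Qed.

Lemma card_set3 (T : finType) (a b c : T) :
  a != b -> b != c -> a != c -> #|[set a; b; c]| = 3%N.
Proof. by move=> ab bc ac; rewrite setUC cardsU1 cards2 ab !inE negb_or ![c == _]eq_sym ac bc. Qed.

Lemma set3_notin_set2 (T : finType) (a b c x y : T) : a != b -> b != c -> a != c ->
  exists2 e, e \in [set a; b; c] & e \notin [set x; y].
Proof.
move=> ab bc ac; apply/subsetPn/negP => /subset_leq_card.
by rewrite card_set3 // cards2; case: (x != y).
Qed.

Section Polygon.
Variables (R : realType) (n : nat) (u : 'I_n -> 'rV[R]_3).
Hypotheses (n_ge6 : (6 <= n)%N) (gen : general_position u) (bal : polygon_balanced u).

Definition isolates (v : 'rV[R]_3) (m : 'I_n) :=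
  dot v (u m) < 0 /\ forall k, k != m -> 0 <= dot v (u k).

Lemma essential_isolated m : essential u m -> exists v, isolates v m.
Proof.
move=> ess; have [v not_bal] := not_all_ex_not _ _ ess.
have [v0 not_neg] := imply_to_and _ _ not_bal.
have pos k : k != m -> 0 <= dot v (u k).
  by move=> km; rewrite leNgt; apply/negP => neg; apply: not_neg; exists k.
exists v; split=> //; have [k [_ neg]] := bal v0.
by case: (eqVneq k m) neg => [<- // | /pos]; rewrite leNgt => /negPf ->.
Qed.

Lemma nonneg_on_vertices_eq0 w : (forall k, 0 <= dot w (u k)) -> w = 0.
Proof.
by move=> pos; apply/eqP; apply: contraT => /bal [k [_]]; rewrite ltNge pos.
Qed.

Lemma orthogonal_outside_eq0 (A : {set 'I_n}) v : (#|A| <= 3)%N ->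
  (forall k, k \notin A -> dot v (u k) = 0) -> v = 0.
Proof.
move=> cardA orth; have : (2 < #|~: A|)%N by rewrite cardsCs setCK card_ord; lia.
case/card_gt2P => [x [y [z [[xA yA zA] [xy yz zx]]]]].
rewrite !in_setC in xA yA zA; apply/eqP; apply: contraT => v0.
have xz : x != z by rewrite eq_sym.
by have := gen xy yz xz; rewrite (det3_orthogonal v0 (orth x xA) (orth y yA) (orth z zA)) eqxx.
Qed.

Section IsolatedTriple.
Variables (a b c : 'I_n) (va vb vc : 'rV[R]_3).
Hypotheses (ab : a != b) (bc : b != c) (ac : a != c).
Hypotheses (iso_a : isolates va a) (iso_b : isolates vb b) (iso_c : isolates vc c).

Local Notation outside k := (k \notin [set a; b; c]).

Lemma isolating_cone_trivial t1 t2 t3 : 0 <= t1 -> 0 <= t2 -> 0 <= t3 ->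
  let w := t1 *: va + t2 *: vb + t3 *: vc in
  0 <= dot w (u a) -> 0 <= dot w (u b) -> 0 <= dot w (u c) ->
  [/\ t1 = 0, t2 = 0 & t3 = 0].
Proof.
move=> t1p t2p t3p w wa wb wc.
have terms_ge0 k : outside k ->
    [/\ 0 <= t1 * dot va (u k), 0 <= t2 * dot vb (u k) & 0 <= t3 * dot vc (u k)].
  rewrite !inE => /norP [/norP [ka kb] kc].
  by rewrite !mulr_ge0 // ?iso_a.2 ?iso_b.2 ?iso_c.2.
have w0 : w = 0.
  apply: nonneg_on_vertices_eq0 => k; case: (boolP (outside k)) => [/terms_ge0 [] | ].
    by rewrite !dotDl !dotZl => *; rewrite !addr_ge0.
  by rewrite negbK !inE => /orP [/orP [] | ] /eqP ->.
have terms0 k : outside k ->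
    [/\ t1 * dot va (u k) = 0, t2 * dot vb (u k) = 0 & t3 * dot vc (u k) = 0].
  move=> /terms_ge0 [] ? ? ?; have : dot w (u k) = 0 by rewrite w0 dotE !entry0; ring.
  by rewrite !dotDl !dotZl => ?; split; lra.
have coef0 t v m : isolates v m -> 0 <= t ->
    (forall k, outside k -> t * dot v (u k) = 0) -> t = 0.
  move=> [vm _] t0 tk; apply/eqP; apply: contraT => tn0.
  have v0 : v = 0.
    apply: (orthogonal_outside_eq0 (card_set3_le a b c)) => k /tk /eqP.
    by rewrite mulf_eq0 (negPf tn0) => /eqP.
  by move: vm; rewrite v0 dotE !entry0 !mul0r !addr0 ltxx.
split; [apply: (coef0 _ _ _ iso_a) | apply: (coef0 _ _ _ iso_b) | apply: (coef0 _ _ _ iso_c)];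
  by [|move=> k /terms0 []].
Qed.

Lemma normal_pole : exists w, [/\ dot w (u a) < 0, dot w (u b) = 0, dot w (u c) = 0
  & forall k, outside k -> 0 <= dot w (u k)].
Proof.
have [va_a va_k] := iso_a; have [vb_b vb_k] := iso_b; have [vc_c vc_k] := iso_c.
have va_b : 0 <= dot va (u b) by apply: va_k; rewrite eq_sym.
have va_c : 0 <= dot va (u c) by apply: va_k; rewrite eq_sym.
have vb_c : 0 <= dot vb (u c) by apply: vb_k; rewrite eq_sym.
have vb_a := vb_k a ab; have vc_a := vc_k a ac; have vc_b := vc_k b bc.
have t1_gt0 : 0 < dot vb (u b) * dot vc (u c) - dot vb (u c) * dot vc (u b).
  rewrite ltNge; apply/negP => t1_le0.
  have vc_c' : 0 <= - dot vc (u c) by rewrite oppr_ge0 ltW.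
  have := isolating_cone_trivial (lexx 0) vc_c' vb_c.
  rewrite /= !dotDl !dotZl !mul0r !add0r; case.
  - by rewrite addr_ge0 ?mulr_ge0.
  - by lra.
  - by lra.
  - by move=> _ /eqP; rewrite oppr_eq0 lt_eqF.
(* (t1, t2, t3) is the first row of the adjugate of the matrix (dot v_j (u k)). *)
set t1 := _ - _ in t1_gt0.
pose t2 := dot va (u c) * dot vc (u b) - dot va (u b) * dot vc (u c).
pose t3 := dot va (u b) * dot vb (u c) - dot va (u c) * dot vb (u b).
have t2_ge0 : 0 <= t2 by rewrite /t2; nra.
have t3_ge0 : 0 <= t3 by rewrite /t3; nra.
pose w := t1 *: va + t2 *: vb + t3 *: vc.
have w_b : dot w (u b) = 0 by rewrite /w !dotDl !dotZl /t1 /t2 /t3; ring.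
have w_c : dot w (u c) = 0 by rewrite /w !dotDl !dotZl /t1 /t2 /t3; ring.
exists w; split=> //.
  rewrite ltNge; apply/negP => w_a.
  have [] := isolating_cone_trivial (ltW t1_gt0) t2_ge0 t3_ge0 w_a.
  - by rewrite w_b.
  - by rewrite w_c.
  - by move=> t1_0; rewrite t1_0 ltxx in t1_gt0.
move=> k; rewrite !inE => /norP [/norP [ka kb] kc].
by rewrite /w !dotDl !dotZl !addr_ge0 // mulr_ge0 ?(ltW t1_gt0) ?va_k ?vb_k ?vc_k.
Qed.

Lemma isolated_triple_separates p : p != a -> p != b -> p != c ->
  det3 (u a) (u b) (u c) * det3 (u p) (u b) (u c) < 0.
Proof.
move=> pa pb pc; have p_out : outside p by rewrite !inE !negb_or pa pb pc.
have [w [w_a w_b w_c w_k]] := normal_pole.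
have := det3_dot_cramer (u a) (u b) (u c) (u p) w.
rewrite w_b w_c !mulr0 !addr0 => cramer.
have : 0 <= det3 (u a) (u b) (u c) * det3 (u p) (u b) (u c) * dot w (u a).
  by rewrite -mulrA -cramer mulrA -expr2 mulr_ge0 ?sqr_ge0 ?w_k.
by rewrite nmulr_lge0 // lt_neqAle => ->; rewrite mulf_neq0 ?gen.
Qed.

End IsolatedTriple.

Lemma essential_triple_separates a b c p : a != b -> b != c -> a != c ->
  essential u a -> essential u b -> essential u c -> p != a -> p != b -> p != c ->
  det3 (u a) (u b) (u c) * det3 (u p) (u b) (u c) < 0.
Proof.
move=> ab bc ac /essential_isolated [va iso_a] /essential_isolated [vb iso_b].
move=> /essential_isolated [vc iso_c].
exact: (isolated_triple_separates ab bc ac iso_a iso_b iso_c).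
Qed.

Lemma essential_triple_antipodal_arcs a b c p : a != b -> b != c -> a != c ->
  essential u a -> essential u b -> essential u c -> p != a -> p != b -> p != c ->
  exists y, on_arc (u a) (u b) y /\ on_arc (u c) (u p) (- y).
Proof.
move=> ab bc ac Ea Eb Ec pa pb pc.
have ba : b != a by rewrite eq_sym.
have ca : c != a by rewrite eq_sym.
have cb : c != b by rewrite eq_sym.
have sep_a := essential_triple_separates ab bc ac Ea Eb Ec pa pb pc.
have := essential_triple_separates bc ca ba Eb Ec Ea pb pc pa.
have := essential_triple_separates ca ab cb Ec Ea Eb pc pa pb.
rewrite -[det3 (u c) _ _]det3_rotr -[det3 (u p) (u a) _]det3_rotr.
rewrite -[det3 (u b) _ _]det3_rot -[det3 (u p) (u c) _]det3_rot.
set D := det3 (u a) (u b) (u c) => sep_c sep_b.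
(* Cramer's rule times D writes D^2 u_p as a negative combination of u_a, u_b, u_c. *)
apply: (@positive_relation_antipodal_arcs _ _ _ _ _ (- (D * det3 (u p) (u b) (u c)))
  (- (D * det3 (u a) (u p) (u c))) (- (D * det3 (u a) (u b) (u p))) (D * D)).
- exact: gen.
- by rewrite oppr_gt0.
- by rewrite oppr_gt0.
- by rewrite oppr_ge0 ltW.
- by rewrite -expr2 sqr_ge0.
rewrite -[(D * D) *: _]scalerA (det3_cramer (u a) (u b) (u c) (u p)) -/D.
by rewrite !scalerDr !scalerA !scaleNr -!opprD addNr.
Qed.
End Polygon.

Lemma nxtE n (i : 'I_n) : nxt i = ordS i.
Proof. exact: val_inj. Qed.

Lemma nxt_inj n : injective (@nxt n).
Proof. by move=> i j; rewrite !nxtE => /ordS_inj. Qed.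

Lemma nxt_ord_pred n (i : 'I_n) : nxt (ord_pred i) = i.
Proof. by rewrite nxtE ord_predK. Qed.

Lemma iter_nxt_val n k (i : 'I_n) : (iter k (@nxt n) i : nat) = ((i + k) %% n)%N.
Proof.
elim: k => [|k IH] /=; first by rewrite addn0 modn_small.
by rewrite IH -addn1 modnDml addn1 addnS.
Qed.

Lemma iter_nxt_neq n k (i : 'I_n) : (0 < k < n)%N -> iter k (@nxt n) i != i.
Proof.
move=> /andP [k_gt0 k_lt]; apply/eqP => /(congr1 (@nat_of_ord n)).
rewrite iter_nxt_val -{2}(modn_small (ltn_ord i)) -{2}[nat_of_ord i]addn0 => /eqP.
by rewrite eqn_modDl mod0n modn_small // => /eqP k0; rewrite k0 in k_gt0.
Qed.

Lemma pred_or_succ_outside n (i e : 'I_n) : (3 < n)%N -> e != i -> e != nxt i ->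
  (ord_pred e \notin [set i; nxt i; e]) || (nxt e \notin [set i; nxt i; e]).
Proof.
move=> n_gt3 ei eni.
have no_loop k j : (0 < k < n)%N -> iter k (@nxt n) j = j -> False.
  by move=> /(iter_nxt_neq j) /eqP.
rewrite -negb_and; apply/negP => /andP [].
rewrite !inE => /orP [/orP [] | ] /eqP p_eq.
- by move: eni; rewrite -p_eq nxt_ord_pred eqxx.
- have e_eq : e = nxt (nxt i) by rewrite -p_eq nxt_ord_pred.
  move=> /orP [/orP [] | ] /eqP.
  + by rewrite e_eq; apply: (no_loop 3); lia.
  + by move=> /nxt_inj e_i; rewrite e_i eqxx in ei.
  + by apply: (no_loop 1); lia.
- by move=> _; apply: (no_loop 1 e); [lia | rewrite /= -{1}p_eq nxt_ord_pred].
Qed.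

Theorem lemma6 (R : realType) (n : nat) (u : 'I_n -> 'rV[R]_3) :
  (6 <= n)%N ->
  (forall i, on_sphere (u i)) ->
  general_position u ->
  polygon_balanced u ->
  no_self_intersection u ->
  no_antipodal_intersection u ->
  (exists a b c : 'I_n, [/\ a != b, b != c & a != c] /\
     forall m, essential u m <-> (m = a \/ m = b \/ m = c)) ->
  forall i : 'I_n, essential u i -> ~ essential u (nxt i).
Proof.
move=> n_ge6 _ gen bal _ no_anti [a [b [c [[ab bc ac] ess]]]] i Ei Eni.
have [e e_abc] := set3_notin_set2 i (nxt i) ab bc ac.
rewrite !inE negb_or => /andP [ei eni].
have Ee : essential u e.
  by apply/ess; move: e_abc; rewrite !inE => /orP [/orP [] | ] /eqP; auto.
have ie : i != e by rewrite eq_sym.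
have ni_e : nxt i != e by rewrite eq_sym.
have in_i : i != nxt i by rewrite eq_sym; apply: (iter_nxt_neq (k := 1)); lia.
have arcs q : q != i -> q != nxt i -> q != e ->
    exists y, on_arc (u i) (u (nxt i)) y /\ on_arc (u e) (u q) (- y).
  exact: (essential_triple_antipodal_arcs n_ge6 gen bal in_i ni_e ie Ei Eni Ee).
have /orP [] := pred_or_succ_outside (ltnW (ltnW n_ge6)) ei eni; rewrite !inE !negb_or.
- move=> /andP [/andP [p_i p_ni] p_e]; have [y [y_i y_p]] := arcs _ p_i p_ni p_e.
  apply: (no_anti i (ord_pred e)); first by split; [rewrite eq_sym | rewrite nxt_ord_pred].
  by exists y; split=> //; rewrite /on_edge nxt_ord_pred; apply: on_arcC.
- move=> /andP [/andP [s_i s_ni] s_e]; have [y [y_i y_s]] := arcs _ s_i s_ni s_e.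
  apply: (no_anti i e); first by split=> //; split; rewrite // eq_sym.
  by exists y.
Qed.
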